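(* Let $m,k\in\mathbb{N}$ and let $\gamma\in\mathbb{C}$ with $\gamma,\ -2m-\gamma\notin\mathbb{Z}_0^-$. Then \[ {}_3F_2\left[\begin{array}{r} -2m-1,\ 1+k,\ \gamma;\\ -2m-1-k,\ -2m-\gamma;\end{array}1\right]_{2m+1}=0. \]
   Context: $\mathbb{N}=\{1,2,3,\dots\}$, $\mathbb{Z}_0^-=\{0,-1,-2,\dots\}$. For $a\in\mathbb{C}$ and $n\in\mathbb{N}_0$, $(a)_0=1$ and $(a)_n=a(a+1)\cdots(a+n-1)$. For $N\in\mathbb{N}_0$, ${}_3F_2\left[\begin{array}{r} a_1,a_2,a_3;\\ b_1,b_2;\end{array}z\right]_N=\sum_{n=0}^{N}\frac{(a_1)_n(a_2)_n(a_3)_n}{(b_1)_n(b_2)_n}\frac{z^n}{n!}$ (the sum of the first $N+1$ terms), defined whenever $(b_1)_n(b_2)_n\neq0$ for $0\le n\le N$. *)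

From HB Require Import structures.
From mathcomp Require Import all_boot all_order all_algebra.
From mathcomp Require Import reals complex.
Set Implicit Arguments. Unset Strict Implicit. Unset Printing Implicit Defensive.
Import Order.TTheory GRing.Theory Num.Theory.
Local Open Scope ring_scope.

Definition poch (F : fieldType) (a : F) (n : nat) : F :=
  \prod_(i < n) (a + i%:R).

Definition F32_trunc (F : fieldType) (a1 a2 a3 b1 b2 z : F) (N : nat) : F :=
  \sum_(n < N.+1)
     (poch a1 n * poch a2 n * poch a3 n) / (poch b1 n * poch b2 n)
       * (z ^+ n / (n`!)%:R).

From HB Require Import structures.
From mathcomp Require Import all_boot all_order all_algebra.
From mathcomp Require Import reals complex.
From mathcomp Require Import ring.
Import Order.TTheory GRing.Theory Num.Theory.
Local Open Scope ring_scope.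

(* With N = 2m+1, b = 1+k and c = gamma the series is the terminating
   well-poised 3F2(-N, b, c; 1-N-b, 1-N-c; 1).  The reflection
   (1-N-x)_n = (-1)^n (x)_N / (x)_(N-n) turns its n-th term into
   (-1)^n C(N,n) (b)_n (b)_(N-n) (c)_n (c)_(N-n) / ((b)_N (c)_N),
   which changes sign under n |-> N-n because N is odd, so the sum
   equals its own negative. *)

Section Pochhammer.
Variable F : fieldType.
Implicit Types (a x : F) (n p : nat).

Lemma pochS a n : poch a n.+1 = poch a n * (a + n%:R).
Proof. by rewrite /poch big_ord_recr. Qed.

Lemma pochSl a n : poch a n.+1 = a * poch (a + 1) n.
Proof.
rewrite /poch big_ord_recl addr0; congr (_ * _); apply: eq_bigr => i _.
by rewrite lift0 -natr1 addrAC addrA.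
Qed.

Lemma pochD a n p : poch a (n + p) = poch a n * poch (a + n%:R) p.
Proof.
rewrite /poch big_split_ord; congr (_ * _); apply: eq_bigr => i _.
by rewrite natrD addrA.
Qed.

Lemma poch_opp x n : poch (- x) n = (-1) ^+ n * poch (x - n%:R + 1) n.
Proof.
elim: n => [|n IHn]; first by rewrite /poch !big_ord0 mul1r.
have -> : x - n.+1%:R + 1 = x - n%:R by rewrite -natr1; ring.
by rewrite pochS IHn pochSl exprS; ring.
Qed.

Lemma poch_nat p n : poch p.+1%:R n * p`!%:R = (p + n)`!%:R :> F.
Proof.
elim: n => [|n IHn]; first by rewrite /poch big_ord0 mul1r addn0.
by rewrite pochS mulrAC IHn addnS factS natrM mulrC -natrD addSn.
Qed.

Lemma poch_oppn N n : (n <= N)%N ->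
  poch (- N%:R) n * (N - n)`!%:R = (-1) ^+ n * N`!%:R :> F.
Proof.
move=> le_nN; rewrite poch_opp -mulrA -natrB // natr1.
by rewrite poch_nat subnK.
Qed.

Lemma poch_reflect N x n : (n <= N)%N ->
  poch (1 - N%:R - x) n = (-1) ^+ n * poch (x + (N - n)%:R) n.
Proof.
move=> le_nN; have -> : 1 - N%:R - x = - (x + N%:R - 1) by ring.
by rewrite poch_opp natrB //; congr (_ * poch _ _); ring.
Qed.

Lemma poch_neq0 a n : (forall j : nat, a != - j%:R) -> poch a n != 0.
Proof. by move=> a_neq; apply/prodf_neq0 => i _; rewrite addr_eq0 a_neq. Qed.

End Pochhammer.

Lemma sum_antisym_eq0 (F : numFieldType) (N : nat) (f : nat -> F) :
  (forall n, (n <= N)%N -> f (N - n)%N = - f n) -> \sum_(n < N.+1) f n = 0.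
Proof.
move=> f_antisym; set S := \sum_(n < N.+1) f n.
have S_opp : S = - S.
  rewrite {1}/S (reindex_inj rev_ord_inj) -sumrN; apply: eq_bigr => n _ /=.
  by rewrite subSS f_antisym // -ltnS.
have : S *+ 2 == 0 by rewrite mulr2n {1}S_opp addNr.
by rewrite mulrn_eq0 => /eqP.
Qed.

Section WellPoised.
Variable F : numFieldType.
Variables (N : nat) (b c : F).

Definition well_poised_term n : F :=
  (-1) ^+ n * 'C(N, n)%:R * (poch b n * poch b (N - n))
    * (poch c n * poch c (N - n)) / (poch b N * poch c N).

Lemma well_poised_term_sym n : odd N -> (n <= N)%N ->
  well_poised_term (N - n) = - well_poised_term n.
Proof.
move=> odd_N le_nN; rewrite /well_poised_term subKn // bin_sub //.
rewrite [poch b (N - n) * _]mulrC [poch c (N - n) * _]mulrC.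
by rewrite -signr_odd oddB // odd_N signr_addb signr_odd expr1 mulN1r !mulNr.
Qed.

Hypotheses (b_N : poch b N != 0) (c_N : poch c N != 0).

Lemma F32_trunc_well_poisedE :
  F32_trunc (- N%:R) b c (1 - N%:R - b) (1 - N%:R - c) 1 N
  = \sum_(n < N.+1) well_poised_term n.
Proof.
apply: eq_bigr => -[n /=]; rewrite ltnS => le_nN _.
have fact_neq0 p : p`!%:R != 0 :> F by rewrite pnatr_eq0 -lt0n fact_gt0.
have binE : 'C(N, n)%:R = N`!%:R / (n`!%:R * (N - n)`!%:R) :> F.
  by rewrite -(bin_fact le_nN) !natrM mulfK // mulf_neq0.
have pochNE : poch (- N%:R) n = (-1) ^+ n * N`!%:R / (N - n)`!%:R :> F.
  by rewrite -poch_oppn // mulfK.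
have splitN (x : F) : poch x N = poch x (N - n) * poch (x + (N - n)%:R) n.
  by rewrite -pochD subnK.
move: b_N c_N; rewrite /well_poised_term !splitN !mulf_eq0 !negb_or.
move=> /andP[b_head b_tail] /andP[c_head c_tail].
have signK x y : (-1) ^+ n * x * ((-1) ^+ n * y) = x * y :> F.
  by rewrite mulrACA -expr2 sqrr_sign mul1r.
rewrite !poch_reflect // signK binE pochNE expr1n.
by field; rewrite ?fact_neq0 ?b_head ?b_tail ?c_head ?c_tail ?signr_eq0.
Qed.

Theorem F32_trunc_well_poised_odd : odd N ->
  F32_trunc (- N%:R) b c (1 - N%:R - b) (1 - N%:R - c) 1 N = 0.
Proof.
move=> odd_N; rewrite F32_trunc_well_poisedE.
by apply: sum_antisym_eq0 => n; apply: well_poised_term_sym.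
Qed.

End WellPoised.

Theorem mainTheorem12 (R : realType) (m k : nat) (gamma : R[i]) :
  (0 < m)%N -> (0 < k)%N ->
  (forall j : nat, gamma != - (j%:R)) ->
  (forall j : nat, - (2 * m)%:R - gamma != - (j%:R)) ->
  F32_trunc (- (2 * m + 1)%:R) (1 + k%:R) gamma
            (- (2 * m + 1 + k)%:R) (- (2 * m)%:R - gamma) 1 (2 * m + 1) = 0.
Proof.
move=> _ _ gamma_neq _.
have -> : - (2 * m + 1 + k)%:R = 1 - (2 * m + 1)%:R - (1 + k%:R) :> R[i].
  by rewrite !natrD; ring.
have -> : - (2 * m)%:R - gamma = 1 - (2 * m + 1)%:R - gamma :> R[i].
  by rewrite !natrD; ring.
apply: F32_trunc_well_poised_odd; last by rewrite oddD oddM.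
- apply: poch_neq0 => j.
  by rewrite -subr_eq0 opprK [1 + _]addrC natr1 -natrD pnatr_eq0 addSn.
- exact: poch_neq0.
Qed.
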